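(* Let $\lambda_1,\lambda_2\in\mathbb{C}$ and let $\alpha,\beta\in\mathbb{C}$ with $\alpha+\beta\notin\mathbb{Z}$ and $\alpha\notin\{-1,-2,-3,\dots\}$. On $W=V_{\lambda_1}\otimes V_{\lambda_2}$ (with basis $e_n\otimes f_m$, $n,m\ge 0$, where $\{e_n\}$ is the standard basis of $V_{\lambda_1}$ and $\{f_m\}$ that of $V_{\lambda_2}$) put $H^{(1)}=H\otimes\mathbb{I}$, $H^{(2)}=\mathbb{I}\otimes H$, and let $D=H^{(1)}-H^{(2)}-\lambda_1+\lambda_2+2\alpha+2\beta+2$, a diagonal operator which is invertible. Define operators on $W$ by $$\Delta(H)=H^{(1)}+H^{(2)},$$ $$\Delta(E)=D^{-1}\Big((H^{(1)}-\lambda_1+2\alpha+2\beta+2)(E\otimes\mathbb{I})+(\lambda_2-H^{(2)}+2\alpha+2\beta+2)(\mathbb{I}\otimes E)\Big),$$ $$\Delta(F)=D^{-1}\Big((H^{(1)}-\lambda_1+2\alpha+2)(F\otimes\mathbb{I})+(\lambda_2-H^{(2)}+2\beta)(\mathbb{I}\otimes F)\Big).$$ Then (a) $\Delta(H),\Delta(E),\Delta(F)$ satisfy $[\Delta(H),\Delta(E)]=2\Delta(E)$, $[\Delta(H),\Delta(F)]=-2\Delta(F)$, $[\Delta(E),\Delta(F)]=1$, i.e. they define a representation of the oscillator algebra on $W$; and (b) for all integers $0\le k\le N$, the vectors $w_{k,N}=\sum_{n=0}^N Q_n(k,N)\,e_n\otimes f_{N-n}$ satisfy $\Delta(H)w_{k,N}=(\lambda_1+\lambda_2+2N)w_{k,N}$,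 $\Delta(E)w_{k,N}=w_{k,N+1}$, and $\Delta(F)w_{k,N}=-(N-k)\,w_{k,N-1}$ (with the convention $w_{k,k-1}=0$). In other words, the $Q_n(k,N)$ are the Clebsch–Gordan coefficients realizing, with respect to this tensor product action, vectors of the oscillator-algebra module $V_{\lambda_1+\lambda_2+2k}$ inside $V_{\lambda_1}\otimes V_{\lambda_2}$.
   Context: The oscillator algebra is generated by $H,E,F$ with relations $[H,E]=2E$, $[H,F]=-2F$, $[E,F]=1$. For $\lambda\in\mathbb{C}$, $V_\lambda$ is the module with basis $\{|\lambda,n\rangle: n=0,1,2,\dots\}$ and action $H|\lambda,n\rangle=(\lambda+2n)|\lambda,n\rangle$, $E|\lambda,n\rangle=|\lambda,n+1\rangle$, $F|\lambda,n\rangle=-n|\lambda,n-1\rangle$. Products of operators such as $D^{-1}(\cdots)(E\otimes\mathbb{I})$ mean composition (first apply $E\otimes\mathbb{I}$, then the diagonal operators). The functions $Q_n(k,N)$ (proportional to Hahn polynomials) are $$Q_n(k,N)=\binom{N}{n}\,{}_3F_2\!\left(\begin{matrix}-n,\ n+\alpha+\beta-N+1,\ -k\\ \alpha+1,\ -N\end{matrix}\;\Big|\;1\right),$$ where ${}_3F_2$ is the terminating hypergeometric series $\sum_{j\ge0}\frac{(a_1)_j(a_2)_j(a_3)_j}{j!(b_1)_j(b_2)_j}z^j$ with Pochhammer symbols $(a)_j=a(a+1)\cdots(a+j-1)$ (the sum terminates at $j=\min(n,k)\le N$). *)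

(* Scalars: an arbitrary numClosedFieldType C (e.g. algC or
   complex R), generalizing the complex numbers. *)
From mathcomp Require Import all_boot all_order all_algebra.
Set Implicit Arguments. Unset Strict Implicit. Unset Printing Implicit Defensive.
Import Order.TTheory GRing.Theory Num.Theory.
Local Open Scope ring_scope.

Section Osc.
Variable C : numClosedFieldType.

(* A vector of (a completion of) V_l1 (x) V_l2 is its coefficient array:
   v n m = coefficient of e_n (x) f_m. *)
Definition vec := nat -> nat -> C.

(* W = V_l1 (x) V_l2 : finitely supported coefficient arrays *)
Definition inW (v : vec) : Prop :=
  exists B : nat, forall n m, (B <= n + m)%N -> v n m = 0.

Definition vadd (u v : vec) : vec := fun n m => u n m + v n m.
Definition vsub (u v : vec) : vec := fun n m => u n m - v n m.
Definition vscale (c : C) (v : vec) : vec := fun n m => c * v n m.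
Definition vzero : vec := fun _ _ => 0.

(* E (x) I : e_n (x) f_m |-> e_{n+1} (x) f_m *)
Definition E1 (v : vec) : vec := fun n m => if n is n'.+1 then v n' m else 0.
Definition E2 (v : vec) : vec := fun n m => if m is m'.+1 then v n m' else 0.
(* F (x) I : e_n (x) f_m |-> -n e_{n-1} (x) f_m *)
Definition F1 (v : vec) : vec := fun n m => - (n.+1)%:R * v n.+1 m.
Definition F2 (v : vec) : vec := fun n m => - (m.+1)%:R * v n m.+1.
Definition H1 (l1 : C) (v : vec) : vec := fun n m => (l1 + 2 * n%:R) * v n m.
Definition H2 (l2 : C) (v : vec) : vec := fun n m => (l2 + 2 * m%:R) * v n m.

Definition Deig (l1 l2 a b : C) (n m : nat) : C :=
  (l1 + 2 * n%:R) - (l2 + 2 * m%:R) - l1 + l2 + 2 * a + 2 * b + 2.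
Definition Dop (l1 l2 a b : C) (v : vec) : vec :=
  fun n m => Deig l1 l2 a b n m * v n m.
Definition Dinv (l1 l2 a b : C) (v : vec) : vec :=
  fun n m => v n m / Deig l1 l2 a b n m.

Definition DeltaH (l1 l2 : C) (v : vec) : vec := vadd (H1 l1 v) (H2 l2 v).

Definition DeltaE (l1 l2 a b : C) (v : vec) : vec :=
  Dinv l1 l2 a b
    (vadd (vadd (vscale (- l1 + 2 * a + 2 * b + 2) (E1 v)) (H1 l1 (E1 v)))
          (vsub (vscale (l2 + 2 * a + 2 * b + 2) (E2 v)) (H2 l2 (E2 v)))).

Definition DeltaF (l1 l2 a b : C) (v : vec) : vec :=
  Dinv l1 l2 a b
    (vadd (vadd (vscale (- l1 + 2 * a + 2) (F1 v)) (H1 l1 (F1 v)))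
          (vsub (vscale (l2 + 2 * b) (F2 v)) (H2 l2 (F2 v)))).

Definition comm (A B : vec -> vec) (v : vec) : vec := vsub (A (B v)) (B (A v)).

Definition poch (x : C) (j : nat) : C := \prod_(i < j) (x + i%:R).

Definition hyp3F2 (a1 a2 a3 b1 b2 : C) (J : nat) : C :=
  \sum_(j < J.+1)
    poch a1 j * poch a2 j * poch a3 j / ((j`!)%:R * poch b1 j * poch b2 j).

(* Q_n(k,N) ; the series terminates at j = min(n,k) *)
Definition Qfun (a b : C) (n k N : nat) : C :=
  ('C(N, n))%:R *
  hyp3F2 (- n%:R) (n%:R + a + b - N%:R + 1) (- k%:R) (a + 1) (- N%:R) (minn n k).

Definition wvec (a b : C) (k N : nat) : vec :=
  fun n m => if (n + m == N)%N then Qfun a b n k N else 0.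

End Osc.

(* The relations (a) are a direct computation, valid on all coefficient arrays: Delta(E) and
   Delta(F) are E (x) 1 + 1 (x) E and F (x) 1 + 1 (x) F corrected by diagonal factors, and the
   eigenvalue of D on e_n (x) f_m depends only on n - m, so every denominator met in
   [Delta(E), Delta(F)] is D shifted by an even integer, nonzero since alpha + beta is not an
   integer.  Read coefficientwise,
   Delta(E) w_{k,N} = w_{k,N+1} is a three-term contiguous relation for Q, which holds term by
   term in the 3F2 sum by Pascal's rule.  By Chu-Vandermonde Q_n(k,k) has the closed form
   C(k,n) (k-n-beta)_n / (alpha+1)_n, which gives Delta(F) w_{k,k} = 0; the formula for
   Delta(F) w_{k,N} then follows by induction on N from [Delta(E), Delta(F)] = 1. *)
From mathcomp Require Import all_boot all_order all_algebra.
From mathcomp Require Import ring.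
From Stdlib Require Import FunctionalExtensionality.
Set Implicit Arguments. Unset Strict Implicit. Unset Printing Implicit Defensive.
Import Order.TTheory GRing.Theory Num.Theory.
Local Open Scope ring_scope.

Lemma mul_bin_bin N n j : (j <= n)%N -> (n <= N)%N ->
  ('C(N, n) * 'C(n, j) = 'C(N, j) * 'C(N - j, n - j))%N.
Proof.
move=> le_jn le_nN; have le_jN := leq_trans le_jn le_nN.
have le_nj_Nj : (n - j <= N - j)%N by rewrite leq_sub2r.
have NnE : (N - j - (n - j) = N - n)%N by rewrite subnBA // subnK.
apply/eqP; rewrite -(eqn_pmul2r (_ : 0 < j`! * (n - j)`! * (N - n)`!)%N);
  last by rewrite !muln_gt0 !fact_gt0.
apply/eqP; transitivity N`!.
  by rewrite -(bin_fact le_nN) -(bin_fact le_jn); ring.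
by rewrite -(bin_fact le_jN) -(bin_fact le_nj_Nj) NnE; ring.
Qed.

Section Pochhammer.
Variable C : numClosedFieldType.
Implicit Types x B c : C.

Lemma poch0 x : poch x 0 = 1.
Proof. by rewrite /poch big_ord0. Qed.

Lemma pochS x j : poch x j.+1 = poch x j * (x + j%:R).
Proof. by rewrite /poch big_ord_recr. Qed.

Lemma pochSl x j : poch x j.+1 = x * poch (x + 1) j.
Proof.
rewrite /poch big_ord_recl addr0; congr (_ * _).
by apply: eq_bigr => i _; rewrite /= /bump add1n -addrA nat1r.
Qed.

Lemma pochD x j l : poch x (j + l) = poch x j * poch (x + j%:R) l.
Proof.
elim: l => [|l IHl]; first by rewrite addn0 poch0 mulr1.
by rewrite addnS !pochS IHl natrD addrA mulrA.
Qed.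

Lemma poch_opp_nat (n j : nat) : poch (- n%:R : C) j = (-1) ^+ j * (n ^_ j)%:R.
Proof.
elim: j => [|j IHj]; first by rewrite poch0 ffactn0 expr0 mulr1.
rewrite pochS IHj ffactnSr exprS natrM.
have [le_jn|lt_nj] := leqP j n; first by rewrite natrB //; ring.
by rewrite ffact_small //; ring.
Qed.

Lemma chu_vandermonde n B c :
  \sum_(j < n.+1) (-1) ^+ j * ('C(n, j))%:R * poch B j * poch (c + j%:R) (n - j)
  = poch (c - B) n.
Proof.
elim: n B c => [|n IHn] B c.
  by rewrite big_ord1 /= subnn !poch0 expr0 bin0 !mulr1.
pose t j := (-1) ^+ j * ('C(n, j))%:R * poch B j * poch (c + j%:R) (n.+1 - j).
have sum_t : \sum_(j < n.+2) t j = (c + n%:R) * poch (c - B) n.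
  rewrite big_ord_recr /= {2}/t bin_small // !mulr0 !mul0r addr0 -IHn mulr_sumr.
  apply: eq_bigr => [[j /= lt_jn]] _.
  by rewrite /t subSn // pochS natrB //; ring.
have pascal (i : 'I_n.+1) :
    (-1) ^+ i.+1 * ('C(n.+1, i.+1))%:R * poch B i.+1 * poch (c + i.+1%:R) (n - i)
    = t i.+1 - B * ((-1) ^+ i * ('C(n, i))%:R * poch (B + 1) i
                     * poch (c + 1 + i%:R) (n - i)).
  by rewrite /t binS natrD pochSl exprS subSS -natr1 addrA (addrAC c 1); ring.
rewrite big_ord_recl (eq_bigr _ (fun i _ => pascal i)) sumrB -mulr_sumr IHn.
rewrite addrA [X in X - _](_ : _ = \sum_(j < n.+2) t j); last first.
  by rewrite [RHS]big_ord_recl /t !bin0.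
by rewrite sum_t pochS (addrC B) addrKA; ring.
Qed.

End Pochhammer.

Section ClebschGordanCoefficients.
Variables (C : numClosedFieldType) (a b : C) (k : nat).
Hypothesis ha : forall n : nat, a != - (n.+1)%:R.

Definition Qterm (n N j : nat) : C :=
  (-1) ^+ j * ('C(k, j))%:R * ('C(N - j, n - j))%:R
  * poch (n%:R + a + b - N%:R + 1) j / poch (a + 1) j.

Definition Qbin (n N : nat) : C := \sum_(j < n.+1) Qterm n N j.

Lemma poch_a1_neq0 j : poch (a + 1) j != 0.
Proof. by apply/prodf_neq0 => i _; rewrite -addrA nat1r addr_eq0 ha. Qed.

Lemma Qfun_Qbin n N : (n <= N)%N -> Qfun a b n k N = Qbin n N.
Proof.
move=> le_nN; rewrite /Qbin (bigID (fun j : 'I_n.+1 => j < (minn n k).+1)%N) /=.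
rewrite [X in _ + X]big1 ?addr0 => [|j]; last first.
  rewrite ltnS leq_min -ltnS ltn_ord /= -ltnNge => lt_kj.
  by rewrite /Qterm bin_small // !(mulr0, mul0r).
rewrite -(big_ord_widen _ (Qterm n N)) ?ltnS ?geq_minl // /Qfun /hyp3F2 mulr_sumr.
apply: eq_bigr => [[j /=]]; rewrite ltnS leq_min => /andP[le_jn _] _.
have le_jN : (j <= N)%N := leq_trans le_jn le_nN.
have bin_neq0 p : (j <= p)%N -> ('C(p, j))%:R != 0 :> C.
  by move=> le_jp; rewrite pnatr_eq0 -lt0n bin_gt0.
have fact_neq0 : (j`!)%:R != 0 :> C by rewrite pnatr_eq0 -lt0n fact_gt0.
have binE : 'C(N, n)%:R = 'C(N, j)%:R * 'C(N - j, n - j)%:R / 'C(n, j)%:R :> C.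
  by rewrite -natrM -mul_bin_bin // natrM mulfK ?bin_neq0.
rewrite /Qterm !poch_opp_nat -!bin_ffact !natrM binE.
by field; rewrite poch_a1_neq0 fact_neq0 signr_eq0 !bin_neq0.
Qed.

Lemma Qbin_contiguous n m :
  (n.+1%:R + a + b + 1) * Qbin n (n + m) + (a + b + 1 - m%:R) * Qbin n.+1 (n + m)
  = (n.+1%:R - m%:R + a + b + 1) * Qbin n.+1 (n + m).+1.
Proof.
set x := a + b + 1 - m%:R.
have xE : n%:R + a + b - (n + m)%:R + 1 = x by rewrite /x; ring.
have x1E : n.+1%:R + a + b - (n + m)%:R + 1 = x + 1 by rewrite /x; ring.
have xE' : n.+1%:R + a + b - (n + m).+1%:R + 1 = x by rewrite /x; ring.
have pochSx j : x * poch (x + 1) j = poch x j * (x + j%:R) by rewrite -pochSl pochS.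
rewrite /Qbin /Qterm xE x1E xE' (big_ord_recr n.+1) (big_ord_recr n.+1) /=.
rewrite !mulrDr addrA !mulr_sumr -big_split; congr (_ + _).
  apply: eq_bigr => j _; have le_jn : (j <= n)%N := ltn_ord j; rewrite [LHS]/=.
  have le_jnm : (j <= n + m)%N by rewrite (leq_trans le_jn) ?leq_addr.
  rewrite !subSn // binS natrD.
  set A := ('C(n + m - j, n - j))%:R; set B := ('C(n + m - j, (n - j).+1))%:R.
  have binE : (n%:R - j%:R + 1) * B = m%:R * A :> C.
    by rewrite -natrB // natr1 -!natrM mul_bin_left subnBA // subnK // addKn.
  set s := (-1) ^+ j * ('C(k, j))%:R; set pa := poch (a + 1) j.
  (* the difference of the two sides is a combination of binE and pochSx *)
  apply: subr0_eq.
  transitivity (- (poch x j * s / pa) * ((n%:R - j%:R + 1) * B - m%:R * A)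
                + s * B / pa * (x * poch (x + 1) j - poch x j * (x + j%:R))).
    by rewrite /x; ring.
  by rewrite binE pochSx !subrr !mulr0 addr0.
rewrite !subnn !bin0; apply: subr0_eq.
transitivity ((-1) ^+ n.+1 * ('C(k, n.+1))%:R / poch (a + 1) n.+1
              * (x * poch (x + 1) n.+1 - poch x n.+1 * (x + n.+1%:R))).
  by rewrite /x; ring.
by rewrite pochSx subrr mulr0.
Qed.

Lemma Qbin0 N : Qbin 0 N = 1.
Proof. by rewrite /Qbin big_ord1 /Qterm /= !bin0 expr0 !poch0 divr1 !mulr1. Qed.

Lemma Qbin_top n : (k <= n)%N -> Qbin n.+1 n = 0.
Proof.
move=> le_kn; rewrite /Qbin big_ord_recr big1 /= => [|j _].
  by rewrite /Qterm bin_small // !(mulr0, mul0r, add0r).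
by rewrite /Qterm (subSn (ltn_ord j : (j <= n)%N)) (bin_small (ltnSn _)) !(mulr0, mul0r).
Qed.

Lemma Qbin_diag n : (n <= k)%N ->
  Qbin n k = ('C(k, n))%:R * poch (k%:R - n%:R - b) n / poch (a + 1) n.
Proof.
move=> le_nk.
rewrite (_ : k%:R - n%:R - b = a + 1 - (n%:R + a + b - k%:R + 1)); last by ring.
rewrite -chu_vandermonde mulr_sumr mulr_suml; apply: eq_bigr => j _.
have le_jn : (j <= n)%N := ltn_ord j.
have pa_split : poch (a + 1) n = poch (a + 1) j * poch (a + 1 + j%:R) (n - j).
  by rewrite -pochD subnKC.
have /andP[paj_neq0 pan_neq0] :
    (poch (a + 1) j != 0) && (poch (a + 1 + j%:R) (n - j) != 0).
  by rewrite -negb_or -mulf_eq0 -pa_split poch_a1_neq0.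
have bin_neq0 : ('C(k - j, n - j))%:R != 0 :> C.
  by rewrite pnatr_eq0 -lt0n bin_gt0 leq_sub2r.
have binE : 'C(k, j)%:R = 'C(k, n)%:R * 'C(n, j)%:R / 'C(k - j, n - j)%:R :> C.
  by rewrite -natrM mul_bin_bin // natrM mulfK.
by rewrite /Qterm pa_split binE; field; rewrite paj_neq0 pan_neq0 bin_neq0.
Qed.

End ClebschGordanCoefficients.

Lemma vec_ext (C : numClosedFieldType) (u v : vec C) :
  (forall n m, u n m = v n m) -> u = v.
Proof. by move=> uv; do 2!apply: functional_extensionality => ?; apply: uv. Qed.

Section CoproductAction.
Variables (C : numClosedFieldType) (l1 l2 a b : C).
Hypothesis hab : forall z : int, a + b != z%:~R.

Local Notation D := (Deig l1 l2 a b).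
Local Notation DH := (DeltaH l1 l2).
Local Notation DE := (DeltaE l1 l2 a b).
Local Notation DF := (DeltaF l1 l2 a b).

Lemma DeigE n m : D n m = 2 * (n%:R - m%:R + a + b + 1).
Proof. by rewrite /Deig; ring. Qed.

Lemma Deig_neq0 n m : D n m != 0.
Proof.
rewrite DeigE mulf_neq0 ?pnatr_eq0 //.
apply: contra (hab (m%:Z - n%:Z - 1)) => /eqP D0; apply/eqP.
rewrite (_ : a + b = (n%:R - m%:R + a + b + 1) - (n%:R - m%:R + 1)); last by ring.
by rewrite D0; ring.
Qed.

Lemma DeigSn n m : D n.+1 m = D n m + 2.
Proof. by rewrite !DeigE; ring. Qed.

Lemma DeignS n m : D n m.+1 = D n m - 2.
Proof. by rewrite !DeigE; ring. Qed.

Lemma DeltaH_at v n m : DH v n m = (l1 + l2 + 2 * (n + m)%:R) * v n m.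
Proof. by rewrite /DeltaH /vadd /H1 /H2; ring. Qed.

Lemma DeltaE_at v n m :
  DE v n m = ((D n m + 2 * m%:R) * E1 v n m + (D n m - 2 * n%:R) * E2 v n m) / D n m.
Proof. by rewrite /DeltaE /Dinv /vadd /vsub /vscale /H1 /H2 /Deig; congr (_ / _); ring. Qed.

Lemma DeltaF_at v n m : DF v n m =
  (2 * (a + 1 + n%:R) * F1 v n m + (D n m - 2 * (a + 1 + n%:R)) * F2 v n m) / D n m.
Proof. by rewrite /DeltaF /Dinv /vadd /vsub /vscale /H1 /H2 /Deig; congr (_ / _); ring. Qed.

Lemma E1_DeltaH v n m : E1 (DH v) n m = (l1 + l2 + 2 * (n + m)%:R - 2) * E1 v n m.
Proof. by case: n => [|n]; rewrite /E1 ?mulr0 // DeltaH_at; ring. Qed.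

Lemma E2_DeltaH v n m : E2 (DH v) n m = (l1 + l2 + 2 * (n + m)%:R - 2) * E2 v n m.
Proof. by case: m => [|m]; rewrite /E2 ?mulr0 // DeltaH_at; ring. Qed.

Lemma F1_DeltaH v n m : F1 (DH v) n m = (l1 + l2 + 2 * (n + m)%:R + 2) * F1 v n m.
Proof. by rewrite /F1 DeltaH_at; ring. Qed.

Lemma F2_DeltaH v n m : F2 (DH v) n m = (l1 + l2 + 2 * (n + m)%:R + 2) * F2 v n m.
Proof. by rewrite /F2 DeltaH_at; ring. Qed.

Lemma comm_DeltaH_DeltaE v : comm DH DE v = vscale 2 (DE v).
Proof.
apply: vec_ext => n m.
by rewrite /comm /vsub /vscale DeltaH_at !DeltaE_at E1_DeltaH E2_DeltaH; ring.
Qed.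

Lemma comm_DeltaH_DeltaF v : comm DH DF v = vscale (-2) (DF v).
Proof.
apply: vec_ext => n m.
by rewrite /comm /vsub /vscale DeltaH_at !DeltaF_at F1_DeltaH F2_DeltaH; ring.
Qed.

Lemma comm_DeltaE_DeltaF v : comm DE DF v = v.
Proof.
apply: vec_ext => n m; rewrite /comm /vsub DeltaE_at DeltaF_at /E1 /E2 /F1 /F2.
(* DeigSn and DeignS express every denominator through a single value of D, and are then
   undone to turn the side conditions of field back into values of D *)
by case: n => [|n]; case: m => [|m];
  rewrite ?DeltaE_at ?DeltaF_at /E1 /E2 /F1 /F2 ?DeigSn ?DeignS;
  field; rewrite -?DeignS -?DeigSn !Deig_neq0.
Qed.

Lemma DeltaE_scale c v : DE (vscale c v) = vscale c (DE v).
Proof.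
apply: vec_ext => n m; rewrite /vscale !DeltaE_at.
by case: n => [|n]; case: m => [|m]; rewrite /E1 /E2 /=; ring.
Qed.

Lemma DeltaE0 : DE (vzero C) = vzero C.
Proof.
apply: vec_ext => n m; rewrite DeltaE_at.
by case: n => [|n]; case: m => [|m]; rewrite /E1 /E2 /vzero !mulr0 addr0 mul0r.
Qed.

Hypothesis ha : forall n : nat, a != - (n.+1)%:R.
Variable k : nat.

Local Notation w := (wvec a b k).
Local Notation Q := (Qbin a b k).

Lemma wvecE N n m : w N n m = if (n + m == N)%N then Q n N else 0.
Proof. by rewrite /wvec; case: eqP => // <-; rewrite Qfun_Qbin ?leq_addr. Qed.

Lemma E2_wvec N n m :
  (k <= N)%N -> E2 (w N) n m = if (n + m == N.+1)%N then Q n N else 0.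
Proof.
move=> le_kN; case: m => [|m]; last by rewrite /E2 wvecE addnS eqSS.
by rewrite addn0; case: eqP => // ->; rewrite Qbin_top.
Qed.

Lemma DeltaH_wvec N : DH (w N) = vscale (l1 + l2 + 2 * N%:R) (w N).
Proof.
apply: vec_ext => n m; rewrite DeltaH_at /vscale wvecE.
by case: eqP => [->|_]; rewrite ?mulr0.
Qed.

Lemma DeltaE_wvec N : (k <= N)%N -> DE (w N) = w N.+1.
Proof.
move=> le_kN; apply: vec_ext => n m; apply: (mulIf (Deig_neq0 n m)).
rewrite DeltaE_at divfK ?Deig_neq0 // E2_wvec //.
case: n => [|n]; rewrite /E1 !wvecE ?add0n ?addSn ?eqSS; case: eqP => [<-|_];
  rewrite ?(mulr0, mul0r, addr0, add0r) //.
  by rewrite !Qbin0; ring.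
rewrite DeigE; transitivity (2 * ((n.+1%:R + a + b + 1) * Q n (n + m)
                                  + (a + b + 1 - m%:R) * Q n.+1 (n + m))).
  by ring.
by rewrite Qbin_contiguous; ring.
Qed.

Lemma DeltaF_wvec_diag : DF (w k) = vzero C.
Proof.
apply: vec_ext => n m; apply: (mulIf (Deig_neq0 n m)).
rewrite DeltaF_at divfK ?Deig_neq0 // mul0r /F1 /F2 !wvecE addSn addnS.
case: eqP => [kE|_]; last by rewrite !(mulr0, addr0).
have le_n1k : (n.+1 <= k)%N by rewrite -kE ltnS leq_addr.
rewrite !Qbin_diag ?(ltnW le_n1k) // -kE DeigE (pochS (a + 1)) pochSl.
rewrite (_ : (n + m).+1%:R - n.+1%:R - b + 1 = (n + m).+1%:R - n%:R - b); last by ring.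
have binE : 'C((n + m).+1, n.+1)%:R = m.+1%:R * 'C((n + m).+1, n)%:R / n.+1%:R :> C.
  have -> : m.+1 = ((n + m).+1 - n)%N by rewrite subSn ?leq_addr // addKn.
  by rewrite -natrM -mul_bin_left natrM mulrC mulKf ?pnatr_eq0.
have /andP[pa_neq0 an_neq0] : (poch (a + 1) n != 0) && (a + 1 + n%:R != 0).
  by rewrite -negb_or -mulf_eq0 -pochS poch_a1_neq0.
by rewrite binE; field; rewrite pa_neq0 an_neq0 nat1r pnatr_eq0.
Qed.

Lemma DeltaF_wvec_succ N : (k <= N)%N -> DF (w N.+1) = vsub (DE (DF (w N))) (w N).
Proof.
move=> le_kN; have := comm_DeltaE_DeltaF (w N); rewrite /comm DeltaE_wvec // => EF.
apply: vec_ext => n m; move/(congr1 (fun u => u n m)): EF; rewrite /vsub => EF.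
by rewrite -EF; ring.
Qed.

Lemma DeltaF_wvec_shift d : DF (w (k + d).+1) = vscale (- d.+1%:R) (w (k + d)).
Proof.
elim: d => [|d IHd]; rewrite DeltaF_wvec_succ ?leq_addr //.
  rewrite addn0 DeltaF_wvec_diag DeltaE0.
  by apply: vec_ext => n m; rewrite /vsub /vzero /vscale; ring.
rewrite addnS IHd DeltaE_scale DeltaE_wvec ?leq_addr //.
by apply: vec_ext => n m; rewrite /vsub /vscale; ring.
Qed.

Lemma DeltaF_wvec N : (k <= N)%N ->
  DF (w N) = if N == k then vzero C else vscale (- (N - k)%:R) (w N.-1).
Proof.
move=> le_kN; case: eqVneq => [->|ne_Nk]; first exact: DeltaF_wvec_diag.
have -> : N = (k + (N - k.+1)).+1.
  by rewrite -addSn subnKC // ltn_neqAle eq_sym ne_Nk.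
by rewrite DeltaF_wvec_shift /= subSn ?leq_addr // addKn.
Qed.

End CoproductAction.

Theorem mainTheorem1 (C : numClosedFieldType) (l1 l2 a b : C)
  (hab : forall z : int, a + b != z%:~R)
  (ha : forall n : nat, a != - (n.+1)%:R) :
  (* D is invertible: its eigenvalues are nonzero *)
  (forall n m : nat, Deig l1 l2 a b n m != 0) /\
  (* (a) oscillator algebra relations on W *)
  (forall v : vec C, inW v ->
     comm (DeltaH l1 l2) (DeltaE l1 l2 a b) v = vscale 2 (DeltaE l1 l2 a b v) /\
     comm (DeltaH l1 l2) (DeltaF l1 l2 a b) v = vscale (-2) (DeltaF l1 l2 a b v) /\
     comm (DeltaE l1 l2 a b) (DeltaF l1 l2 a b) v = v) /\
  (* (b) Clebsch-Gordan vectors *)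
  (forall k N : nat, (k <= N)%N ->
     DeltaH l1 l2 (wvec a b k N) = vscale (l1 + l2 + 2 * N%:R) (wvec a b k N) /\
     DeltaE l1 l2 a b (wvec a b k N) = wvec a b k N.+1 /\
     DeltaF l1 l2 a b (wvec a b k N) =
       (if N == k then vzero C
        else vscale (- (N - k)%:R) (wvec a b k N.-1))).
Proof.
split; first exact: Deig_neq0.
split.
  by move=> v _; rewrite comm_DeltaH_DeltaE comm_DeltaH_DeltaF comm_DeltaE_DeltaF.
move=> k N le_kN; split; first exact: DeltaH_wvec.
by split; [exact: DeltaE_wvec | exact: DeltaF_wvec].
Qed.
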